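(* Let $\varepsilon>0$ be a given security threshold (written $\mathsf{negl}(\lambda)$ in the paper) and let $\eta\in\mathbb{Z}^+$ satisfy $1/\eta<\varepsilon$. In the setting described in the context (with $M_o$ strictly positive definite), if \[ \frac{1}{\eta^2}\,\big\|M_c''\,(M_o')^{-1}\,M_c''\big\|\;\le\;\frac14\,\lambda_{\min}(M_o'), \] then both $M_f^{(0)}$ and $M_f^{(1)}$ are density matrices (Hermitian, positive semidefinite, trace one).
   Context: Let $d_1\ge d_2\ge 1$ be integers, $\mathcal H_M=(\mathbb C^2)^{\otimes d_1}$, $\mathcal H_{M_c}=(\mathbb C^2)^{\otimes d_2}$. For $n\ge 1$ and $k\in\{0,1\}^{2n}$ let $U_k=\bigotimes_{j=1}^{n}X^{k_{2j-1}}Z^{k_{2j}}$, where $X,Z$ are the Pauli matrices (quantum one-time pad). Let $M_o$ be a strictly positive definite density matrix on $\mathcal H_M$ and $M_c$ a density matrix on $\mathcal H_{M_c}$. For keys $k\in\{0,1\}^{2d_1}$, $k'\in\{0,1\}^{2d_2}$ put $M_o'=U_kM_oU_k^\dagger$ and $M_c'=U_{k'}M_cU_{k'}^\dagger$. Let $V:\mathcal H_{M_c}\to\mathcal H_M$ be the isometry $V|\psi\rangle=|\psi\rangle\otimes|0\rangle^{\otimes(d_1-d_2)}$ and $M_c''=VM_c'V^\dagger$. On $\mathbb C^2\otimes\mathcal H_M$ (block form with respect to the computational basis of the first, control, qubit) define \[ M_a^{(0)}=\begin{pmatrix}\tfrac12M_o'&0\\0&\tfrac12M_o'\end{pmatrix},\qquad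 M_a^{(1)}=\begin{pmatrix}\tfrac12M_o'&\tfrac1\eta M_c''\\ \tfrac1\eta (M_c'')^\dagger&\tfrac12M_o'\end{pmatrix}. \] For a $2^{d_1+1}\times2^{d_1+1}$ permutation matrix $U_\sigma$ let $M_f^{(b)}=U_\sigma M_a^{(b)}U_\sigma^\dagger$ for $b\in\{0,1\}$. Here $\|\cdot\|$ is the operator norm and $\lambda_{\min}$ the smallest eigenvalue. *)

(* Complex scalars: an arbitrary numClosedFieldType C
   (e.g. algC, or complex R for a real closed field R). *)
From HB Require Import structures.
From mathcomp Require Import all_boot all_order all_algebra all_fingroup.
From mathcomp Require Import sesquilinear spectral.
Set Implicit Arguments. Unset Strict Implicit. Unset Printing Implicit Defensive.
Import Order.TTheory GRing.Theory Num.Theory.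
Local Open Scope ring_scope.

Section QDefs.
Variable C : numClosedFieldType.

Definition dag m n (A : 'M[C]_(m, n)) : 'M[C]_(n, m) := map_mx Num.conj A^T.

Definition hermitian n (A : 'M[C]_n) : Prop := dag A = A.

(* positive semidefinite: Hermitian and <v|A|v> >= 0 for all v
   (row-vector convention: v A v^dagger) *)
Definition psd n (A : 'M[C]_n) : Prop :=
  hermitian A /\ forall v : 'rV[C]_n, 0 <= (v *m A *m dag v) 0 0.

Definition pos_def n (A : 'M[C]_n) : Prop :=
  hermitian A /\ forall v : 'rV[C]_n, v != 0 -> 0 < (v *m A *m dag v) 0 0.

Definition density_matrix n (A : 'M[C]_n) : Prop :=
  hermitian A /\ psd A /\ \tr A = 1.

(* eigenvalues (with multiplicity) of a normal (in particular Hermitian)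
   matrix, as given by MathComp's spectral theorem *)
Definition eigvals n (A : 'M[C]_n) : seq C :=
  [seq spectral_diag A 0 i | i <- enum 'I_n].

(* smallest / largest eigenvalue (meaningful for Hermitian matrices,
   whose eigenvalues are real) *)
Definition lambda_min n (A : 'M[C]_n) : C :=
  let s := eigvals A in foldr Num.min (head 0 s) s.
Definition lambda_max n (A : 'M[C]_n) : C :=
  let s := eigvals A in foldr Num.max (head 0 s) s.

(* operator norm (induced by the Euclidean norm) = largest singular value
   = sqrt (lambda_max (A^dagger A)) *)
Definition opnorm m n (A : 'M[C]_(m, n)) : C := sqrtC (lambda_max (dag A *m A)).

Definition pauliX : 'M[C]_2 := \matrix_(i, j) (i != j)%:R.
Definition pauliZ : 'M[C]_2 := \matrix_(i, j) ((i == j)%:R * (-1) ^+ (val i)).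

Definition pauli1 (x z : bool) : 'M[C]_2 :=
  (if x then pauliX else 1%:M) *m (if z then pauliZ else 1%:M).

(* the j-th qubit (j = 0 is the first / most significant qubit) of the
   computational basis index a of an n-qubit register *)
Definition qbit (n j a : nat) : 'I_2 := @inord 1 (odd (a %/ 2 ^ (n - j.+1))).

(* quantum one-time pad U_k = (x)_{j=1}^n X^{k_{2j-1}} Z^{k_{2j}},
   k in {0,1}^{2n} given as a (2n)-tuple (0-based: k_{2j}, k_{2j+1}) *)
Definition otp n (k : (2 * n).-tuple bool) : 'M[C]_(2 ^ n) :=
  \matrix_(a, b) \prod_(j < n)
     pauli1 (nth false k (2 * j)) (nth false k (2 * j).+1)
            (qbit n j a) (qbit n j b).

(* isometry V |psi> = |psi> (x) |0>^{(d1-d2)} *)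
Definition padV d1 d2 : 'M[C]_(2 ^ d1, 2 ^ d2) :=
  \matrix_(a, i) (val a == val i * 2 ^ (d1 - d2))%N%:R.

Lemma two_blocks d : (2 ^ d + 2 ^ d = 2 ^ d.+1)%N.
Proof. by rewrite expnS mul2n addnn. Qed.

(* 2x2 block matrix w.r.t. the first (control) qubit *)
Definition qblock d (A B D E : 'M[C]_(2 ^ d)) : 'M[C]_(2 ^ d.+1) :=
  castmx (two_blocks d, two_blocks d) (block_mx A B D E).

End QDefs.

From Pilot Require Import Defs.
From HB Require Import structures.
From mathcomp Require Import all_boot all_order all_algebra all_fingroup.
From mathcomp Require Import sesquilinear spectral.
From mathcomp Require Import ring zify.
Import Order.TTheory GRing.Theory Num.Theory Num.Def.
Set Implicit Arguments. Unset Strict Implicit. Unset Printing Implicit Defensive.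
Local Open Scope ring_scope.

(* Conjugation by a unitary preserves density matrices, and both the one-time
   pad U_k (a tensor product of Pauli matrices) and U_sigma are unitary, so it
   suffices that the blocks [[P/2, B], [B^dag, P/2]] with P = M_o' and B = 0 or
   B = M_c''/eta are density matrices.  Their trace is tr P = 1, and they are
   positive semidefinite once 2 |<x|B|y>| <= <x|P|x>/2 + <y|P|y>/2 for all x, y.
   For B = M_c''/eta, Cauchy-Schwarz for the inner product <.|P|.> gives
   |<x|B|y>|^2 <= <x|P|x> <y|B P^-1 B|y>; with <y|N|y> <= ||N|| |y|^2,
   lambda_min(P) |y|^2 <= <y|P|y> and the hypothesis, this is at most
   <x|P|x> <y|P|y> / 4, and AM-GM concludes. *)

Local Notation "''[' u | A | v ]" := (form conjC A u v)
  (format "''[' u  |  A  |  v ]").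

Section Adjoint.
Variable C : numClosedFieldType.
Implicit Types (m n p : nat) (a : C).

Lemma dagK m n (A : 'M[C]_(m, n)) : dag (dag A) = A.
Proof. exact: trmxCK. Qed.

Lemma dag_mul m n p (A : 'M[C]_(m, n)) (B : 'M[C]_(n, p)) :
  dag (A *m B) = dag B *m dag A.
Proof. by rewrite /dag trmx_mul map_mxM. Qed.

Lemma dag0 m n : dag (0 : 'M[C]_(m, n)) = 0.
Proof. by rewrite /dag trmx0 map_mx0. Qed.

Lemma dagZ_real m n a (A : 'M[C]_(m, n)) :
  a \is Num.real -> dag (a *: A) = a *: dag A.
Proof. by move=> /conj_Creal aR; rewrite /dag linearZ map_mxZ /= aR. Qed.

Lemma dag_invmx n (A : 'M[C]_n) : dag (invmx A) = invmx (dag A).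
Proof. by rewrite /dag trmx_inv map_invmx. Qed.

Lemma dag_row_mx m n1 n2 (A : 'M[C]_(m, n1)) (B : 'M[C]_(m, n2)) :
  dag (row_mx A B) = col_mx (dag A) (dag B).
Proof. by rewrite /dag tr_row_mx map_col_mx. Qed.

Lemma dag_block_mx p (A B D E : 'M[C]_p) :
  dag (block_mx A B D E) = block_mx (dag A) (dag D) (dag B) (dag E).
Proof. by rewrite /dag tr_block_mx map_block_mx. Qed.

Lemma hermitian_hermsymmx n (A : 'M[C]_n) : Defs.hermitian A -> A \is hermsymmx.
Proof. by move=> hA; rewrite qualifE /= expr0 scale1r; apply/eqP; rewrite -[LHS]hA. Qed.

Lemma hermitian_conj m n (U : 'M[C]_(m, n)) X :
  Defs.hermitian X -> Defs.hermitian (U *m X *m dag U).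
Proof. by move=> hX; rewrite /Defs.hermitian !dag_mul dagK hX mulmxA. Qed.

Lemma hermitianZ_real n a (A : 'M[C]_n) :
  a \is Num.real -> Defs.hermitian A -> Defs.hermitian (a *: A).
Proof. by move=> aR hA; rewrite /Defs.hermitian dagZ_real // hA. Qed.

End Adjoint.

Section Forms.
Variable C : numClosedFieldType.
Implicit Types (m n : nat) (a : C).

Lemma formE n (A : 'M[C]_n) u v : '[u | A | v] = (u *m A *m dag v) 0 0.
Proof. by []. Qed.

Lemma form_dag n (A : 'M[C]_n) u v : '[u | A | v]^* = '[v | dag A | u].
Proof.
rewrite !formE.
have -> : ((u *m A *m dag v) 0 0)^* = dag (u *m A *m dag v) 0 0 by rewrite !mxE.
by rewrite !dag_mul dagK mulmxA.
Qed.

Lemma form_hermitianC n (A : 'M[C]_n) u v :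
  Defs.hermitian A -> '[u | A | v]^* = '[v | A | u].
Proof. by move=> hA; rewrite form_dag hA. Qed.

Lemma formZmx n a (A : 'M[C]_n) u v : '[u | a *: A | v] = a * '[u | A | v].
Proof. by rewrite !formE -scalemxAr -scalemxAl mxE. Qed.

Lemma form_conjmx m n (U : 'M[C]_(m, n)) X u v :
  '[u | U *m X *m dag U | v] = '[u *m U | X | v *m U].
Proof. by rewrite !formE dag_mul !mulmxA. Qed.

Lemma pos_def_form_ge0 n (A : 'M[C]_n) u : pos_def A -> 0 <= '[u | A | u].
Proof.
case=> _ pA; have [->|u0] := eqVneq u 0; first by rewrite form0l.
exact/ltW/pA.
Qed.

Lemma pos_def1 n : pos_def (1%:M : 'M[C]_n).
Proof.
split=> [|v v0]; first by rewrite /Defs.hermitian /dag trmx1 map_mx1.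
by have := dotmx_is_dotmx v0; rewrite dotmxE mulmx1.
Qed.

Lemma pos_def_unit n (A : 'M[C]_n) : pos_def A -> A \in unitmx.
Proof.
case=> _ pA; rewrite unitmxE unitfE; apply/negP => /det0P[v v0 vA].
by have := pA v v0; rewrite vA mul0mx mxE ltxx.
Qed.

Lemma pos_def_cauchy_schwarz n (A : 'M[C]_n) u v : pos_def A ->
  `|'[u | A | v]| ^+ 2 <= '[u | A | u] * '[v | A | v].
Proof.
move=> pA; have hA := pA.1.
have [->|v0] := eqVneq v 0; first by rewrite !form0r normr0 expr0n mulr0.
have q_gt0 : 0 < '[v | A | v] by exact: pA.2.
set p : C := '[u | A | u]; set q : C := '[v | A | v]; set r : C := '[u | A | v].
have rC : '[v | A | u] = r^* by rewrite form_hermitianC.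
have qC : q^* = q by rewrite form_hermitianC.
(* expand 0 <= <w | A | w> at the minimiser w = u - (r / q) v *)
have := pos_def_form_ge0 (u - (r / q) *: v) pA.
rewrite formDl !formDr !(formNl, formNr, formZl, formZr) -/p -/q -/r rC.
have rqC : (r / q)^* = r^* / q by rewrite fmorph_div /= qC.
rewrite /= rqC normCK.
have -> : p - r^* / q * r + (- (r / q * r^*) - - (r / q * (r^* / q * q))) =
          p - r * r^* / q by field; rewrite gt_eqF.
by rewrite subr_ge0 ler_pdivrMr // mulrC.
Qed.

Lemma pos_def_conj_invmx n (P B : 'M[C]_n) v : pos_def P ->
  '[v | dag B *m invmx P *m B | v] =
  '[v *m dag B *m invmx P | P | v *m dag B *m invmx P].
Proof.
move=> pP; rewrite !formE !dag_mul dag_invmx pP.1 dagK !mulmxA.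
by rewrite mulmxKV ?pos_def_unit.
Qed.

Lemma form_schur_bound n (P B : 'M[C]_n) u v : pos_def P ->
  `|'[u | B | v]| ^+ 2 <= '[u | P | u] * '[v | dag B *m invmx P *m B | v].
Proof.
move=> pP; rewrite pos_def_conj_invmx //.
have -> : '[u | B | v] = '[u | P | v *m dag B *m invmx P].
  by rewrite !formE !dag_mul dag_invmx pP.1 dagK !mulmxA mulmxK ?pos_def_unit.
exact: pos_def_cauchy_schwarz.
Qed.

End Forms.

Section Spectrum.
Variable C : numClosedFieldType.

Lemma form_diag_mx n (d : 'rV[C]_n) u :
  '[u | diag_mx d | u] = \sum_i d 0 i * `|u 0 i| ^+ 2.
Proof.
rewrite formE mul_mx_diag mxE; apply: eq_bigr => i _.
by rewrite !mxE normCK mulrCA mulrA.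
Qed.

Lemma hermitian_form_spectral n (H : 'M[C]_n) u : Defs.hermitian H ->
  exists w : 'rV[C]_n,
    '[u | H | u] = \sum_i spectral_diag H 0 i * `|w 0 i| ^+ 2 /\
    '[u | 1%:M | u] = \sum_i `|w 0 i| ^+ 2.
Proof.
move=> /hermitian_hermsymmx /hermitian_normalmx /orthomx_spectralP HE.
set P := spectralmx H in HE.
have Pu : P \is unitarymx by exact: spectral_unitarymx.
have PdagP : dag P *m P = 1%:M by rewrite -[dag P]mul1mx mulmxKtV.
exists (u *m dag P); split.
  by rewrite {1}HE invmx_unitary // -[P in _ *m P]dagK form_conjmx form_diag_mx.
have -> : 1%:M = dag P *m 1%:M *m dag (dag P) :> 'M_n by rewrite mulmx1 dagK.
rewrite form_conjmx -diag_const_mx form_diag_mx.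
by apply: eq_bigr => i _; rewrite mxE mul1r.
Qed.

Lemma real_foldr_min (s : seq C) h : h \is Num.real -> {subset s <= Num.real} ->
  foldr Num.min h s \is Num.real /\ {in s, forall x, foldr Num.min h s <= x}.
Proof.
move=> hR; elim: s => [|a s IH] sR //=.
have aR := sR a (mem_head _ _).
have [mR le_m] := IH (fun x xs => sR x (@mem_behead _ (a :: s) x xs)).
split; first by case: (real_leP aR mR).
move=> x; rewrite inE => /predU1P[->|xs]; first by case: (real_leP aR mR) => // /ltW.
by case: (real_leP aR mR) => [am|_]; [exact: le_trans am (le_m x xs) | exact: le_m].
Qed.

Lemma real_foldr_max (s : seq C) h : h \is Num.real -> {subset s <= Num.real} ->
  foldr Num.max h s \is Num.real /\ {in s, forall x, x <= foldr Num.max h s}.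
Proof.
move=> hR; elim: s => [|a s IH] sR //=.
have aR := sR a (mem_head _ _).
have [mR le_m] := IH (fun x xs => sR x (@mem_behead _ (a :: s) x xs)).
split; first by case: (real_leP aR mR).
move=> x; rewrite inE => /predU1P[->|xs]; first by case: (real_leP aR mR) => // /ltW.
by case: (real_leP aR mR) => [_|/ltW ma]; [exact: le_m | exact: le_trans (le_m x xs) ma].
Qed.

Lemma eigvals_real n (H : 'M[C]_n) : Defs.hermitian H ->
  {subset 0 :: eigvals H <= Num.real}.
Proof.
move=> /hermitian_hermsymmx /hermitian_spectral_diag_real /mxOverP dR x.
by rewrite inE => /predU1P[->|/mapP[i _ ->]]; rewrite ?real0 ?dR.
Qed.

Lemma head_eigvals_real n (H : 'M[C]_n) : Defs.hermitian H ->
  head 0 (eigvals H) \is Num.real.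
Proof.
move=> /eigvals_real sR; apply: sR.
by case: (eigvals H) => [|a s]; rewrite ?mem_head // inE mem_head orbT.
Qed.

Lemma lambda_min_form n (H : 'M[C]_n) u : Defs.hermitian H ->
  lambda_min H * '[u | 1%:M | u] <= '[u | H | u].
Proof.
move=> hH; have [_ le_min] := real_foldr_min (head_eigvals_real hH)
  (fun x xs => eigvals_real hH (mem_behead xs)).
have [w [-> ->]] := hermitian_form_spectral u hH.
rewrite mulr_sumr; apply: ler_sum => i _; rewrite ler_wpM2r ?exprn_ge0 //.
by apply: le_min; apply: map_f; rewrite mem_enum.
Qed.

Lemma form_le_lambda_max n (H : 'M[C]_n) u : Defs.hermitian H ->
  '[u | H | u] <= lambda_max H * '[u | 1%:M | u].
Proof.
move=> hH; have [_ le_max] := real_foldr_max (head_eigvals_real hH)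
  (fun x xs => eigvals_real hH (mem_behead xs)).
have [w [-> ->]] := hermitian_form_spectral u hH.
rewrite mulr_sumr; apply: ler_sum => i _; rewrite ler_wpM2r ?exprn_ge0 //.
by apply: le_max; apply: map_f; rewrite mem_enum.
Qed.

Lemma form_le_opnorm n (N : 'M[C]_n) u : 0 <= '[u | N | u] ->
  '[u | N | u] <= opnorm N * '[u | 1%:M | u].
Proof.
move=> r_ge0; have [->|u0] := eqVneq u 0; first by rewrite !form0l mulr0.
set r : C := '[u | N | u] in r_ge0 *; set g : C := '[u | 1%:M | u].
have g_gt0 : 0 < g by exact: (pos_def1 C n).2.
set L := lambda_max (dag N *m N).
(* Cauchy-Schwarz for u and u N^dag in the standard inner product *)
have ruNE : '[u | 1%:M | u *m dag N] = r by rewrite !formE mulmx1 dag_mul dagK mulmxA.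
have uNE : '[u *m dag N | 1%:M | u *m dag N] = '[u | dag N *m N | u].
  by rewrite !formE mulmx1 dag_mul dagK !mulmxA.
have r2_le : r ^+ 2 <= L * g ^+ 2.
  have := pos_def_cauchy_schwarz u (u *m dag N) (pos_def1 C n).
  rewrite ruNE uNE ger0_norm // => /le_trans; apply.
  rewrite expr2 mulrCA ler_wpM2l ?(ltW g_gt0) //.
  by apply: form_le_lambda_max; rewrite /Defs.hermitian dag_mul dagK.
have L_ge0 : 0 <= L.
  by rewrite -(pmulr_lge0 _ (exprn_gt0 2 g_gt0)) (le_trans _ r2_le) ?exprn_ge0.
rewrite /opnorm -/L -ler_sqr ?nnegrE ?mulr_ge0 ?sqrtC_ge0 ?(ltW g_gt0) //.
by rewrite exprMn sqrtCK.
Qed.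

End Spectrum.

Section BlockMatrices.
Variable C : numClosedFieldType.

Lemma sqr_le_mul_AMGM (a b z : C) : 0 <= a -> 0 <= b -> 0 <= z ->
  z ^+ 2 <= a * b -> z *+ 2 <= a + b.
Proof.
move=> a_ge0 b_ge0 z_ge0 zab.
rewrite -ler_sqr ?nnegrE ?mulrn_wge0 ?addr_ge0 //.
apply: le_trans (real_leif_AGM2_scaled (ger0_real a_ge0) (ger0_real b_ge0)).1.
have -> : (z *+ 2) ^+ 2 = z ^+ 2 *+ 4 by rewrite -[z *+ 2]mulr_natr exprMn -natrX mulr_natr.
by rewrite ler_pMn2r.
Qed.

Lemma psd_block_mx p (A D B : 'M[C]_p) : Defs.hermitian A -> Defs.hermitian D ->
  (forall x y, `|'[x | B | y]| *+ 2 <= '[x | A | x] + '[y | D | y]) ->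
  psd (block_mx A B (dag B) D).
Proof.
move=> hA hD hB; split; first by rewrite /Defs.hermitian dag_block_mx dagK hA hD.
move=> v; rewrite -[v]hsubmxK; set x := lsubmx v; set y := rsubmx v.
have -> : (row_mx x y *m block_mx A B (dag B) D *m dag (row_mx x y)) 0 0 =
    '[x | A | x] + '[x | B | y]^* + ('[x | B | y] + '[y | D | y]).
  rewrite dag_row_mx mul_row_block mul_row_col !mulmxDl.
  by rewrite mxE [X in X + _]mxE [X in _ + X]mxE form_dag.
have := hB x y; set a := '[x | A | x]; set d := '[y | D | y]; set c : C := '[x | B | y].
rewrite -subr_ge0 => le_c.
have le_Re : 0 <= `|c| *+ 2 + (c + c^*).
  have := (leif_Re_Creal (- c)).1; rewrite ReE normrN rmorphN ler_pdivrMr ?ltr0n //.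
  by rewrite -subr_ge0 mulr_natr opprD !opprK.
rewrite (_ : _ + _ = (a + d - `|c| *+ 2) + (`|c| *+ 2 + (c + c^*))); last by ring.
exact: addr_ge0.
Qed.

Lemma density_block_half n (P B : 'M[C]_n) : density_matrix P ->
  (forall x y, `|'[x | B | y]| *+ 2 <= 2^-1 * '[x | P | x] + 2^-1 * '[y | P | y]) ->
  density_matrix (block_mx (2^-1 *: P) B (dag B) (2^-1 *: P)).
Proof.
move=> [hP [_ trP]] hB.
have hP2 : Defs.hermitian (2^-1 *: P) by apply: hermitianZ_real hP; rewrite rpredV realn.
have pM : psd (block_mx (2^-1 *: P) B (dag B) (2^-1 *: P)).
  by apply: psd_block_mx => // x y; rewrite !formZmx.
split; [exact: pM.1 | split=> //].
by rewrite mxtrace_block mxtraceZ trP mulr1 [RHS](splitr 1) mul1r.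
Qed.

Lemma form_offdiag_le_half n (P B : 'M[C]_n) (e : C) :
  pos_def P -> Defs.hermitian B -> 0 <= e ->
  e ^+ 2 * opnorm (B *m invmx P *m B) <= 4^-1 * lambda_min P ->
  forall x y, `|'[x | e *: B | y]| *+ 2 <= 2^-1 * '[x | P | x] + 2^-1 * '[y | P | y].
Proof.
move=> pP hB e_ge0 small x y.
rewrite formZmx normrM ger0_norm //; apply: sqr_le_mul_AMGM.
- by rewrite mulr_ge0 ?invr_ge0 ?ler0n ?pos_def_form_ge0.
- by rewrite mulr_ge0 ?invr_ge0 ?ler0n ?pos_def_form_ge0.
- by rewrite mulr_ge0.
set a := '[x | P | x]; set b := '[y | P | y]; set g := '[y | 1%:M | y].
set q := '[y | B *m invmx P *m B | y].
have a_ge0 : 0 <= a := pos_def_form_ge0 x pP.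
have g_ge0 : 0 <= g := pos_def_form_ge0 y (pos_def1 C n).
have q_ge0 : 0 <= q by rewrite /q -{1}hB pos_def_conj_invmx ?pos_def_form_ge0.
have c2_le : `|'[x | B | y]| ^+ 2 <= a * q.
  by have := @form_schur_bound _ _ P B x y pP; rewrite hB.
have q_le : q <= opnorm (B *m invmx P *m B) * g := form_le_opnorm q_ge0.
have lg_le : lambda_min P * g <= b := lambda_min_form y pP.1.
set o := opnorm _ in small q_le.
have -> : 2^-1 * a * (2^-1 * b) = a * (4^-1 * b).
  have -> : 4^-1 = 2^-1 * 2^-1 :> C by rewrite -invfM -natrM.
  ring.
rewrite exprMn; apply: le_trans (_ : e ^+ 2 * (a * (o * g)) <= _).
  by rewrite ler_wpM2l ?exprn_ge0 // (le_trans c2_le) // ler_wpM2l.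
rewrite mulrCA ler_wpM2l // mulrA.
apply: le_trans (_ : 4^-1 * lambda_min P * g <= _).
  by rewrite ler_wpM2r.
by rewrite -mulrA ler_wpM2l ?invr_ge0 ?ler0n.
Qed.

End BlockMatrices.

Section Unitary.
Variable C : numClosedFieldType.

Lemma unitarymx_dagmul n (U : 'M[C]_n) : U \is unitarymx -> dag U *m U = 1%:M.
Proof. by move=> Uu; rewrite -[dag U]mul1mx mulmxKtV. Qed.

Lemma unitarymx_sum m n (U : 'M[C]_(m, n)) i j : U \is unitarymx ->
  \sum_k U i k * (U j k)^* = (i == j)%:R.
Proof.
move/unitarymxP/matrixP/(_ i j); rewrite !mxE => <-.
by apply: eq_bigr => k _; rewrite !mxE.
Qed.

Lemma pos_def_conj n (U X : 'M[C]_n) :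
  U \is unitarymx -> pos_def X -> pos_def (U *m X *m dag U).
Proof.
move=> Uu [hX pX]; split=> [|v v0]; first exact: hermitian_conj.
rewrite -formE form_conjmx; apply: pX; apply: contra v0 => /eqP vU0.
by rewrite -[v]mulmx1 -(unitarymxP Uu) mulmxA vU0 mul0mx.
Qed.

Lemma density_matrix_conj n (U X : 'M[C]_n) :
  U \is unitarymx -> density_matrix X -> density_matrix (U *m X *m dag U).
Proof.
move=> Uu [hX [[_ pX] trX]]; have hUX := hermitian_conj U hX.
split=> //; split; first by split=> // v; rewrite -formE form_conjmx; apply: pX.
by rewrite mxtrace_mulC mulmxA unitarymx_dagmul ?mul1mx.
Qed.

Lemma density_matrix_castmx m n (e : m = n) (X : 'M[C]_m) :
  density_matrix X -> density_matrix (castmx (e, e) X).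
Proof. by case: n / e; rewrite castmx_id. Qed.

Lemma perm_mx_unitary n (s : 'S_n) : (perm_mx s : 'M[C]_n) \is unitarymx.
Proof. by apply/unitarymxP; rewrite tr_perm_mx map_perm_mx -perm_mxM mulgV perm_mx1. Qed.

End Unitary.

Lemma bits_inj n a b : (a < 2 ^ n -> b < 2 ^ n ->
  (forall i, i < n -> odd (a %/ 2 ^ i) = odd (b %/ 2 ^ i)) -> a = b)%N.
Proof.
elim: n a b => [|n IHn] a b; first by rewrite expn0 !ltnS !leqn0 => /eqP-> /eqP->.
move=> a_lt b_lt ab_bits; have := ab_bits 0%N isT; rewrite expn0 !divn1 => odd_ab.
have half_ab : (a %/ 2 = b %/ 2)%N.
  apply: IHn; rewrite ?ltn_divLR -?expnSr // => i i_lt.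
  by rewrite -!divnMA -expnS; apply: ab_bits.
by rewrite -[a]odd_double_half -[b]odd_double_half odd_ab -!divn2 half_ab.
Qed.

Lemma qbit_inj n (a b : 'I_(2 ^ n)) :
  (forall j : 'I_n, qbit n j a = qbit n j b) -> a = b.
Proof.
move=> ab_qbits; apply/val_inj/(bits_inj (ltn_ord a) (ltn_ord b)) => i i_lt.
have j_lt : (n - i.+1 < n)%N by lia.
have := congr1 val (ab_qbits (Ordinal j_lt)); rewrite /qbit /= !inordK ?ltnS ?leq_b1 //.
by rewrite (_ : n - (n - i.+1).+1 = i)%N; [case: odd; case: odd | lia].
Qed.

Section OneTimePad.
Variable C : numClosedFieldType.

(* [qbit] is the n-qubit indexing used by [otp], so [otp k] is a [qubit_tensor] *)
Definition qubit_tensor n (P : 'I_n -> 'M[C]_2) : 'M[C]_(2 ^ n) :=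
  \matrix_(a, b) \prod_(j < n) P j (qbit n j a) (qbit n j b).

Lemma qubit_tensor_unitary n (P : 'I_n -> 'M[C]_2) :
  (forall j, P j \is unitarymx) -> qubit_tensor P \is unitarymx.
Proof.
move=> Pu; apply/unitarymxP/matrixP => a c; rewrite !mxE.
pose bits (b : 'I_(2 ^ n)) : {ffun 'I_n -> 'I_2} := [ffun j : 'I_n => qbit n j b].
have bits_bij : bijective bits.
  apply: inj_card_bij; last by rewrite card_ffun !card_ord.
  by move=> b b' /ffunP eq_bits; apply: qbit_inj => j; have := eq_bits j; rewrite !ffunE.
transitivity (\sum_(f : {ffun 'I_n -> 'I_2})
    \prod_j (P j (qbit n j a) (f j) * (P j (qbit n j c) (f j))^* )).
  rewrite (reindex bits) /=; last exact: onW_bij.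
  apply: eq_bigr => b _; rewrite !mxE rmorph_prod -big_split /=.
  by apply: eq_bigr => j _; rewrite ffunE.
rewrite -(bigA_distr_bigA (fun j i => P j (qbit n j a) i * (P j (qbit n j c) i)^*)) /=.
under eq_bigr => j _ do rewrite unitarymx_sum //.
have [<-|ac] := eqVneq a c; first by rewrite big1 // => j _; rewrite eqxx.
case: (pickP (fun j : 'I_n => qbit n j a != qbit n j c)) => [j qj|qE].
  by rewrite (bigD1 j) //= (negbTE qj) mul0r.
by case/eqP: ac; apply: qbit_inj => j; apply/eqP/negbFE/qE.
Qed.

Lemma pauliX_unitary : pauliX C \is unitarymx.
Proof.
apply/unitarymxP/matrixP => i j; rewrite !mxE big_ord_recl big_ord1 !mxE.
by case: i j => [[|[|//]] ?] [[|[|//]] ?];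
  rewrite /= ?(conjC0, conjC1, mulr0, mulr1, addr0, add0r).
Qed.

Lemma pauliZ_unitary : pauliZ C \is unitarymx.
Proof.
apply/unitarymxP/matrixP => i j; rewrite !mxE big_ord_recl big_ord1 !mxE.
by case: i j => [[|[|//]] ?] [[|[|//]] ?]; rewrite /= ?(expr0, expr1, mul0r, mul1r,
  mulr0, mulr1, conjC0, conjC1, rmorphN, rmorph1, mulrNN, addr0, add0r).
Qed.

Lemma pauli1_unitary x z : pauli1 C x z \is unitarymx.
Proof.
have one_u : (1%:M : 'M[C]_2) \is unitarymx.
  by apply/unitarymxP; rewrite trmx1 map_mx1 mulmx1.
by apply: mul_unitarymx; [case: x | case: z]; rewrite ?pauliX_unitary ?pauliZ_unitary.
Qed.

Lemma otp_unitary n (k : (2 * n).-tuple bool) : otp C k \is unitarymx.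
Proof. by apply: qubit_tensor_unitary => j; apply: pauli1_unitary. Qed.

End OneTimePad.

Theorem theorem12 (C : numClosedFieldType) (d1 d2 : nat)
  (hd2 : (1 <= d2)%N) (hd12 : (d2 <= d1)%N)
  (eps : C) (heps : 0 < eps) (eta : nat) (heta : (0 < eta)%N)
  (heta_eps : (eta%:R)^-1 < eps)
  (Mo : 'M[C]_(2 ^ d1)) (Mc : 'M[C]_(2 ^ d2))
  (hMo_dens : density_matrix Mo) (hMo_pd : pos_def Mo)
  (hMc_dens : density_matrix Mc)
  (k : (2 * d1).-tuple bool) (k' : (2 * d2).-tuple bool)
  (s : 'S_(2 ^ d1.+1)) :
  let Mo' := otp C k *m Mo *m dag (otp C k) in
  let Mc' := otp C k' *m Mc *m dag (otp C k') in
  let Mc'' := padV C d1 d2 *m Mc' *m dag (padV C d1 d2) in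
  let Ma0 := qblock (2^-1 *: Mo') 0 0 (2^-1 *: Mo') in
  let Ma1 := qblock (2^-1 *: Mo') ((eta%:R)^-1 *: Mc'')
                    ((eta%:R)^-1 *: dag Mc'') (2^-1 *: Mo') in
  let Usig : 'M[C]_(2 ^ d1.+1) := perm_mx s in
  let Mf0 := Usig *m Ma0 *m dag Usig in
  let Mf1 := Usig *m Ma1 *m dag Usig in
  (eta%:R ^+ 2)^-1 * opnorm (Mc'' *m invmx Mo' *m Mc'') <= 4^-1 * lambda_min Mo' ->
  density_matrix Mf0 /\ density_matrix Mf1.
Proof.
move=> Mo' Mc' Mc'' Ma0 Ma1 Usig Mf0 Mf1 small.
have Uk := otp_unitary C k.
have dMo' : density_matrix Mo' := density_matrix_conj Uk hMo_dens.
have pMo' : pos_def Mo' := pos_def_conj Uk hMo_pd.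
have hMc'' : Defs.hermitian Mc'' by do 2 apply: hermitian_conj; case: hMc_dens.
split; apply: density_matrix_conj (perm_mx_unitary C s) _; apply: density_matrix_castmx.
  rewrite -[X in block_mx _ _ X _](dag0 C); apply: density_block_half => // x y.
  rewrite formE mulmx0 mul0mx mxE normr0 mul0rn.
  by rewrite addr_ge0 // mulr_ge0 ?invr_ge0 ?ler0n ?pos_def_form_ge0.
rewrite -dagZ_real ?rpredV ?realn //; apply: density_block_half => //.
apply: form_offdiag_le_half; rewrite ?invr_ge0 ?ler0n //.
by rewrite exprVn.
Qed.
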